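(* Let $k\ge1$, $\lambda>0$, $0<\theta<1$, and $F(x,y,\theta)=\frac{1+x+\theta y}{1+x+y}$. Define sequences by $z^-_{1,1}=z^-_{2,1}=\lambda\theta^k$, $z^+_{1,1}=z^+_{2,1}=\lambda$ and $$z^-_{1,n+1}=\lambda F(z^-_{1,n},z^+_{2,n},\theta)^k,\ z^+_{1,n+1}=\lambda F(z^+_{1,n},z^-_{2,n},\theta)^k,\ z^-_{2,n+1}=\lambda F(z^-_{2,n},z^+_{1,n},\theta)^k,\ z^+_{2,n+1}=\lambda F(z^+_{2,n},z^-_{1,n},\theta)^k.$$ Then the limits $z^\pm_j=\lim_{n\to\infty}z^\pm_{j,n}$ ($j=1,2$) exist, the vector $(z^-_1,z^+_1,z^-_2,z^+_2)$ solves $$z^-_1=\lambda F(z^-_1,z^+_2,\theta)^k,\ z^+_1=\lambda F(z^+_1,z^-_2,\theta)^k,\ z^-_2=\lambda F(z^-_2,z^+_1,\theta)^k,\ z^+_2=\lambda F(z^+_2,z^-_1,\theta)^k,\quad ( * )$$ and every family $(z_{1,i},z_{2,i})_{i\in\mathbb{T}^k}$ of positive numbers satisfying, for all $i\in\mathbb{T}^k$, $$z_{1,i}=\lambda\prod_{j\in S(i)}F(z_{1,j},z_{2,j},\theta),\qquad z_{2,i}=\lambda\prod_{j\in S(i)}F(z_{2,j},z_{1,j},\theta)\quad ( ** )$$ satisfies $z^-_j\le z_{j,i}\le z^+_j$ for $j=1,2$ and all $i\in\mathbb{T}^k$.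
   Context: $\mathbb{T}^k$ is the rooted Cayley tree of order $k$ and $S(i)$ denotes the set of the $k$ direct successors of a vertex $i$ (neighbours of $i$ one step further from the root). System ( ** ) is the exponentiated form (with $z_{1,i}=e^{\tilde h_{+,i}}$, $z_{2,i}=e^{\tilde h_{-,i}}$) of the compatibility equations for splitting Gibbs measures of the Soft-Core Widom–Rowlinson model. *)

From Stdlib Require Import Reals List.
Import ListNotations.
Open Scope R_scope.

Definition F (x y theta : R) : R := (1 + x + theta * y) / (1 + x + y).

(* The rooted Cayley tree T^k: a vertex is the word (list) of child indices
   read from the vertex back to the root; the root is [] and the k direct
   successors of a vertex v are (j :: v) for j = 0, ..., k-1. *)
Definition vertex (k : nat) (v : list nat) : Prop := Forall (fun a => (a < k)%nat) v.

Definition prod_succ (k : nat) (f : list nat -> R) (v : list nat) : R :=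
  fold_right Rmult 1 (map (fun j => f (j :: v)) (seq 0 k)).

(* The iteration: zseq n = (z^-_{1,n+1}, z^+_{1,n+1}, z^-_{2,n+1}, z^+_{2,n+1}) *)
Fixpoint zseq (k : nat) (lam theta : R) (n : nat) : R * R * R * R :=
  match n with
  | O => (lam * theta ^ k, lam, lam * theta ^ k, lam)
  | S n' =>
      let '(zm1, zp1, zm2, zp2) := zseq k lam theta n' in
      (lam * F zm1 zp2 theta ^ k, lam * F zp1 zm2 theta ^ k,
       lam * F zm2 zp1 theta ^ k, lam * F zp2 zm1 theta ^ k)
  end.

Definition zm1_seq k lam theta (n : nat) : R := let '(a, _, _, _) := zseq k lam theta n in a.
Definition zp1_seq k lam theta (n : nat) : R := let '(_, a, _, _) := zseq k lam theta n in a.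
Definition zm2_seq k lam theta (n : nat) : R := let '(_, _, a, _) := zseq k lam theta n in a.
Definition zp2_seq k lam theta (n : nat) : R := let '(_, _, _, a) := zseq k lam theta n in a.

(* The sequences (z^-_{j,n}) increase and (z^+_{j,n}) decrease, because the map
   (x, y) |-> lam F(x, y, theta)^k is increasing in x and decreasing in y; they
   are bounded, hence converge, and continuity makes the limits fixed points.
   Starting from the a priori bound theta <= F <= 1, the same monotonicity shows
   by induction on n that every solution on the tree lies between z^-_{j,n} and
   z^+_{j,n} at every vertex, and the bound passes to the limit. *)
From Stdlib Require Import Reals List Lra Lia Psatz.
Open Scope R_scope.

Lemma F_bounds x y theta :
  0 <= x -> 0 <= y -> 0 <= theta <= 1 -> theta <= F x y theta <= 1.
Proof.
  intros hx hy ht; unfold F, Rdiv.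
  split; apply Rmult_le_reg_r with (1 + x + y); try lra;
    rewrite Rmult_assoc, Rinv_l by lra; nra.
Qed.

Lemma F_monotone x y x' y' theta :
  0 <= x <= x' -> 0 <= y' <= y -> 0 <= theta <= 1 -> F x y theta <= F x' y' theta.
Proof.
  intros hx hy ht; unfold F, Rdiv.
  apply Rmult_le_reg_r with ((1 + x + y) * (1 + x' + y')); [nra|].
  replace ((1 + x + theta * y) * / (1 + x + y) * ((1 + x + y) * (1 + x' + y')))
    with ((1 + x + theta * y) * (1 + x' + y')) by (field; lra).
  replace ((1 + x' + theta * y') * / (1 + x' + y') * ((1 + x + y) * (1 + x' + y')))
    with ((1 + x' + theta * y') * (1 + x + y)) by (field; lra).
  assert (cross : (1 + x) * y' <= (1 + x') * y) by nra.
  nra.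
Qed.

Lemma fold_mult_map_bounds {A : Type} (f : A -> R) (l : list A) lo hi :
  0 <= lo -> (forall a, In a l -> lo <= f a <= hi) ->
  lo ^ length l <= fold_right Rmult 1 (map f l) <= hi ^ length l.
Proof.
  intros hlo; induction l as [|a l IH]; intros hf; simpl; [lra|].
  assert (ha := hf a (or_introl eq_refl)).
  assert (hl : lo ^ length l <= fold_right Rmult 1 (map f l) <= hi ^ length l)
    by (apply IH; intros b hb; apply hf; right; exact hb).
  assert (0 <= lo ^ length l) by (apply pow_le; lra).
  split; apply Rmult_le_compat; nra.
Qed.

Lemma prod_succ_bounds k (f : list nat -> R) v lo hi :
  0 <= lo -> (forall j, (j < k)%nat -> lo <= f (j :: v) <= hi) ->
  lo ^ k <= prod_succ k f v <= hi ^ k.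
Proof.
  intros hlo hf.
  assert (B := fold_mult_map_bounds (fun j => f (j :: v)) (seq 0 k) lo hi hlo).
  rewrite length_seq in B; apply B.
  intros j hj; apply in_seq in hj; apply hf; lia.
Qed.

Lemma vertex_cons k v j : vertex k v -> (j < k)%nat -> vertex k (j :: v).
Proof. intros hv hj; constructor; assumption. Qed.

Lemma cv_const (c : R) : Un_cv (fun _ => c) c.
Proof. intros e he; exists 0%nat; intros; unfold Rdist; rewrite Rminus_diag, Rabs_R0; lra. Qed.

Lemma cv_succ (u : nat -> R) l : Un_cv u l -> Un_cv (fun n => u (S n)) l.
Proof. intros H e he; destruct (H e he) as [N HN]; exists N; intros n hn; apply HN; lia. Qed.

Lemma cv_ext (u w : nat -> R) l : (forall n, u n = w n) -> Un_cv u l -> Un_cv w l.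
Proof. intros E H e he; destruct (H e he) as [N HN]; exists N; intros n hn; rewrite <- E; auto. Qed.

Lemma cv_pow (u : nat -> R) l k : Un_cv u l -> Un_cv (fun n => u n ^ k) (l ^ k).
Proof.
  intro H; induction k as [|k IH]; simpl; [apply cv_const | exact (CV_mult _ _ _ _ H IH)].
Qed.

Lemma cv_inv (u : nat -> R) l : l <> 0 -> Un_cv u l -> Un_cv (fun n => / u n) (/ l).
Proof.
  intros hl H; apply (continuity_seq (/ id)%F); [|exact H].
  apply continuity_pt_inv; [apply derivable_continuous_pt, derivable_pt_id | exact hl].
Qed.

Lemma cv_F (u w : nat -> R) x y theta :
  0 <= x -> 0 <= y -> Un_cv u x -> Un_cv w y ->
  Un_cv (fun n => F (u n) (w n) theta) (F x y theta).
Proof.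
  intros hx hy Hu Hw; unfold F, Rdiv.
  assert (Hden : Un_cv (fun n => 1 + u n) (1 + x)) by exact (CV_plus _ _ _ _ (cv_const 1) Hu).
  apply CV_mult.
  - exact (CV_plus _ _ _ _ Hden (CV_mult _ _ _ _ (cv_const theta) Hw)).
  - apply cv_inv; [lra | exact (CV_plus _ _ _ _ Hden Hw)].
Qed.

Section Recursion.

Variables (k : nat) (lam theta : R).
Hypotheses (lam_ge0 : 0 <= lam) (theta_01 : 0 <= theta <= 1).

Definition phi (x y : R) : R := lam * F x y theta ^ k.

Lemma lam_theta_pow_bounds : 0 <= lam * theta ^ k <= lam.
Proof.
  split; [apply Rmult_le_pos; [|apply pow_le]; lra|].
  rewrite <- (Rmult_1_r lam) at 2; apply Rmult_le_compat_l; [lra|].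
  rewrite <- (pow1 k); apply pow_incr; lra.
Qed.

Lemma phi_bounds x y : 0 <= x -> 0 <= y -> lam * theta ^ k <= phi x y <= lam.
Proof.
  intros hx hy; destruct (F_bounds x y theta hx hy theta_01) as [lo hi]; unfold phi.
  rewrite <- (Rmult_1_r lam) at 4; rewrite <- (pow1 k).
  split; apply Rmult_le_compat_l; try exact lam_ge0; apply pow_incr; lra.
Qed.

Lemma phi_monotone x y x' y' : 0 <= x <= x' -> 0 <= y' <= y -> phi x y <= phi x' y'.
Proof.
  intros hx hy; unfold phi; apply Rmult_le_compat_l; [exact lam_ge0|].
  apply pow_incr; split; [|apply F_monotone; assumption].
  destruct (F_bounds x y theta); lra.
Qed.

Lemma cv_phi (u w : nat -> R) x y :
  0 <= x -> 0 <= y -> Un_cv u x -> Un_cv w y ->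
  Un_cv (fun n => phi (u n) (w n)) (phi x y).
Proof.
  intros hx hy Hu Hw.
  exact (CV_mult _ _ _ _ (cv_const lam) (cv_pow _ _ k (cv_F _ _ _ _ theta hx hy Hu Hw))).
Qed.

Notation zm := (zm1_seq k lam theta).
Notation zp := (zp1_seq k lam theta).

Lemma zseq_sym n : zseq k lam theta n = (zm n, zp n, zm n, zp n).
Proof.
  induction n as [|n IH]; [reflexivity|].
  assert (E : zseq k lam theta (S n) =
              (phi (zm n) (zp n), phi (zp n) (zm n), phi (zm n) (zp n), phi (zp n) (zm n)))
    by (cbn [zseq]; rewrite IH; reflexivity).
  unfold zm1_seq, zp1_seq; rewrite E; reflexivity.
Qed.

Lemma zm_S n : zm (S n) = phi (zm n) (zp n).
Proof. unfold zm1_seq at 1; cbn [zseq]; rewrite zseq_sym; reflexivity. Qed.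

Lemma zp_S n : zp (S n) = phi (zp n) (zm n).
Proof. unfold zp1_seq at 1; cbn [zseq]; rewrite zseq_sym; reflexivity. Qed.

Lemma zm2_seq_zm n : zm2_seq k lam theta n = zm n.
Proof. unfold zm2_seq; rewrite zseq_sym; reflexivity. Qed.

Lemma zp2_seq_zp n : zp2_seq k lam theta n = zp n.
Proof. unfold zp2_seq; rewrite zseq_sym; reflexivity. Qed.

Lemma zseq_bounds n : lam * theta ^ k <= zm n <= lam /\ lam * theta ^ k <= zp n <= lam.
Proof.
  assert (B := lam_theta_pow_bounds).
  induction n as [|n IH].
  - unfold zm1_seq, zp1_seq; simpl; lra.
  - rewrite zm_S, zp_S; split; apply phi_bounds; lra.
Qed.

Lemma zseq_monotone n : zm n <= zm (S n) /\ zp (S n) <= zp n /\ zm n <= zp n.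
Proof.
  assert (B := lam_theta_pow_bounds).
  induction n as [|n [hm [hp hmp]]].
  - destruct (zseq_bounds 1) as [[h1 h2] [h3 h4]].
    unfold zm1_seq at 1 3, zp1_seq at 2 3; simpl; lra.
  - destruct (zseq_bounds n) as [[h1 h2] [h3 h4]].
    destruct (zseq_bounds (S n)) as [[h5 h6] [h7 h8]].
    split; [|split].
    + rewrite (zm_S (S n)); rewrite (zm_S n) at 1; apply phi_monotone; lra.
    + rewrite (zp_S (S n)); rewrite (zp_S n) at 2; apply phi_monotone; lra.
    + rewrite zm_S, zp_S; apply phi_monotone; lra.
Qed.

Lemma zm_cv : { A : R | Un_cv zm A }.
Proof.
  apply growing_cv; [intro n; apply zseq_monotone|].
  exists lam; intros x [n ->]; apply zseq_bounds.
Qed.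

Lemma zp_cv : { B : R | Un_cv zp B }.
Proof.
  apply decreasing_cv; [intro n; apply zseq_monotone|].
  exists (- (lam * theta ^ k)); intros x [n ->]; unfold opp_seq.
  destruct (zseq_bounds n) as [_ [h _]]; lra.
Qed.

Lemma cv_recursion_fixed (u w : nat -> R) x y :
  (forall n, u (S n) = phi (u n) (w n)) -> 0 <= x -> 0 <= y ->
  Un_cv u x -> Un_cv w y -> x = phi x y.
Proof.
  intros hrec hx hy Hu Hw.
  apply (UL_sequence (fun n => u (S n))); [exact (cv_succ _ _ Hu)|].
  intros e he; destruct (cv_phi u w x y hx hy Hu Hw e he) as [N HN].
  exists N; intros n hn; rewrite hrec; exact (HN n hn).
Qed.

Lemma zseq_limits :
  exists A B, Un_cv zm A /\ Un_cv zp B /\ A = phi A B /\ B = phi B A.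
Proof.
  destruct zm_cv as [A HA], zp_cv as [B HB].
  assert (hA : 0 <= A).
  { apply Rle_trans with (zm 0).
    - destruct (zseq_bounds 0) as [[h _] _], lam_theta_pow_bounds; lra.
    - apply growing_ineq; [intro n; apply zseq_monotone | exact HA]. }
  assert (hB : 0 <= B).
  { apply Rle_trans with A; [exact hA|].
    apply (Rle_cv_lim (fun n => proj2 (proj2 (zseq_monotone n))) HA HB). }
  exists A, B; split; [exact HA|]; split; [exact HB|].
  split; [exact (cv_recursion_fixed _ _ A B zm_S hA hB HA HB)
         | exact (cv_recursion_fixed _ _ B A zp_S hB hA HB HA)].
Qed.

Section TreeSolution.

Variables z1 z2 : list nat -> R.
Hypothesis z_nonneg : forall v, vertex k v -> 0 <= z1 v /\ 0 <= z2 v.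
Hypothesis z_compat : forall v, vertex k v ->
  z1 v = lam * prod_succ k (fun w => F (z1 w) (z2 w) theta) v /\
  z2 v = lam * prod_succ k (fun w => F (z2 w) (z1 w) theta) v.

Lemma compat_bounds v lo hi :
  vertex k v -> 0 <= lo ->
  (forall j, (j < k)%nat ->
     lo <= F (z1 (j :: v)) (z2 (j :: v)) theta <= hi /\
     lo <= F (z2 (j :: v)) (z1 (j :: v)) theta <= hi) ->
  lam * lo ^ k <= z1 v <= lam * hi ^ k /\ lam * lo ^ k <= z2 v <= lam * hi ^ k.
Proof.
  intros hv hlo hF; destruct (z_compat v hv) as [-> ->].
  assert (B1 := prod_succ_bounds k (fun w => F (z1 w) (z2 w) theta) v lo hi hlo
                  (fun j hj => proj1 (hF j hj))).
  assert (B2 := prod_succ_bounds k (fun w => F (z2 w) (z1 w) theta) v lo hi hlo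
                  (fun j hj => proj2 (hF j hj))).
  split; split; apply Rmult_le_compat_l; tauto.
Qed.

Lemma tree_zseq_bounds n v :
  vertex k v -> zm n <= z1 v <= zp n /\ zm n <= z2 v <= zp n.
Proof.
  revert v; induction n as [|n IH]; intros v hv.
  - unfold zm1_seq, zp1_seq; simpl.
    rewrite <- (Rmult_1_r lam) at 2 4; rewrite <- (pow1 k).
    apply compat_bounds; [exact hv | lra |].
    intros j hj; destruct (z_nonneg _ (vertex_cons k v j hv hj)).
    split; apply F_bounds; lra.
  - rewrite zm_S, zp_S; unfold phi.
    destruct (zseq_bounds n) as [[h1 _] [h2 _]], lam_theta_pow_bounds.
    apply compat_bounds; [exact hv | destruct (F_bounds (zm n) (zp n) theta); lra |].
    intros j hj; assert (hc := vertex_cons k v j hv hj).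
    destruct (z_nonneg _ hc), (IH _ hc).
    split; split; apply F_monotone; lra.
Qed.

Lemma tree_limit_bounds A B v :
  Un_cv zm A -> Un_cv zp B -> vertex k v ->
  A <= z1 v <= B /\ A <= z2 v <= B.
Proof.
  intros HA HB hv.
  assert (below : forall c, (forall n, zm n <= c) -> A <= c)
    by (intros c hc; exact (Rle_cv_lim hc HA (cv_const c))).
  assert (above : forall c, (forall n, c <= zp n) -> c <= B)
    by (intros c hc; exact (Rle_cv_lim hc (cv_const c) HB)).
  split; split; [apply below | apply above | apply below | apply above];
    intro n; apply (tree_zseq_bounds n v hv).
Qed.

End TreeSolution.

End Recursion.

Theorem mainTheorem12 (k : nat) (lam theta : R) :
  (1 <= k)%nat -> 0 < lam -> 0 < theta < 1 ->
  exists zm1 zp1 zm2 zp2 : R,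
    Un_cv (zm1_seq k lam theta) zm1 /\ Un_cv (zp1_seq k lam theta) zp1 /\
    Un_cv (zm2_seq k lam theta) zm2 /\ Un_cv (zp2_seq k lam theta) zp2 /\
    zm1 = lam * F zm1 zp2 theta ^ k /\ zp1 = lam * F zp1 zm2 theta ^ k /\
    zm2 = lam * F zm2 zp1 theta ^ k /\ zp2 = lam * F zp2 zm1 theta ^ k /\
    (forall z1 z2 : list nat -> R,
       (forall v, vertex k v -> 0 < z1 v /\ 0 < z2 v) ->
       (forall v, vertex k v ->
          z1 v = lam * prod_succ k (fun w => F (z1 w) (z2 w) theta) v /\
          z2 v = lam * prod_succ k (fun w => F (z2 w) (z1 w) theta) v) ->
       forall v, vertex k v ->
         zm1 <= z1 v <= zp1 /\ zm2 <= z2 v <= zp2).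
Proof.
  intros _ hlam htheta.
  assert (hl : 0 <= lam) by lra; assert (ht : 0 <= theta <= 1) by lra.
  destruct (zseq_limits k lam theta hl ht) as (A & B & HA & HB & FA & FB).
  exists A, B, A, B.
  split; [exact HA|]; split; [exact HB|].
  split; [exact (cv_ext _ _ _ (fun n => eq_sym (zm2_seq_zm k lam theta n)) HA)|].
  split; [exact (cv_ext _ _ _ (fun n => eq_sym (zp2_seq_zp k lam theta n)) HB)|].
  do 4 (split; [assumption|]).
  intros z1 z2 hpos hcompat v hv.
  refine (tree_limit_bounds k lam theta hl ht z1 z2 _ hcompat A B v HA HB hv).
  intros w hw; destruct (hpos w hw); lra.
Qed.
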